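(* Let $\mathbf P=(P,\leq,{}',0,1)$ be an orthogonal lub-complete poset. Then the following conditions are equivalent: (i) $\mathbf P$ is an orthocomplemented poset. (ii) For all $x,y\in P$, $x\leq y$ implies $x\rightarrow_C y=1$.
   Context: $(P,\leq,{}',0,1)$ is a bounded poset with an antitone involution ${}'$ ($x\leq y\Rightarrow y'\leq x'$, $x''=x$). It is orthogonal if $x\leq y'$ implies that the supremum $x\vee y$ exists. It is lub-complete if for every lower bound $x$ of a finite subset $M$ of $P$ there is a maximal lower bound of $M$ above $x$. It is orthocomplemented if $x\vee x'=1$ for every $x\in P$. For $A\subseteq P$, $U(A)$ is the set of upper bounds of $A$, $U(x,y)=U(\{x,y\})$, and $\mathrm{Min}\,A$ is the set of minimal elements of $A$. The classical implication is $x\rightarrow_C y:=\mathrm{Min}\,U(x',y)\subseteq P$; $x\rightarrow_C y=1$ means $x\rightarrow_C y=\{1\}$. *)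

From HB Require Import structures.
From mathcomp Require Import all_boot all_order.
Set Implicit Arguments. Unset Strict Implicit. Unset Printing Implicit Defensive.
Import Order.Theory.
Local Open Scope order_scope.

(* A bounded poset (T, <=, \bot = 0, \top = 1) with a unary operation c (= ').
   "Antitone involution" is imposed by explicit hypotheses in the theorem. *)

Section PosetDefs.
Context {disp : Order.disp_t} {T : tbPOrderType disp}.

Definition antitone (c : T -> T) : Prop := forall x y : T, x <= y -> c y <= c x.
Definition involutive_op (c : T -> T) : Prop := forall x : T, c (c x) = x.

Definition U2 (x y : T) (z : T) : Prop := x <= z /\ y <= z.

Definition is_sup (x y s : T) : Prop :=
  U2 x y s /\ forall z, U2 x y z -> s <= z.

Definition Min (A : T -> Prop) (z : T) : Prop :=
  A z /\ forall w, A w -> w <= z -> w = z.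

Definition Max (A : T -> Prop) (z : T) : Prop :=
  A z /\ forall w, A w -> z <= w -> w = z.

Definition lower_bound (M : seq T) (x : T) : Prop := forall m, m \in M -> x <= m.

Definition orthogonal (c : T -> T) : Prop :=
  forall x y : T, x <= c y -> exists s, is_sup x y s.

Definition lub_complete : Prop :=
  forall (M : seq T) (x : T), lower_bound M x ->
    exists2 m, Max (lower_bound M) m & x <= m.

Definition orthocomplemented (c : T -> T) : Prop :=
  forall x : T, is_sup x (c x) \top.

Definition implC (c : T -> T) (x y : T) : T -> Prop := Min (U2 (c x) y).

(* x ->_C y = 1 means x ->_C y = {1} *)
Definition implC_is_one (c : T -> T) (x y : T) : Prop :=
  forall z : T, implC c x y z <-> z = \top.
End PosetDefs.

(* (i) => (ii): if x <= y then every upper bound of {x', y} bounds {x, x'}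
   and is therefore 1, so Min U(x', y) = {1}.
   (ii) => (i): by the antitone involution, lub-completeness dualises to:
   below every upper bound z of a pair lies a minimal upper bound of it.
   Applied to {x', x}, whose only minimal upper bound is 1 by (ii) with
   y = x, this forces z = 1, i.e. x \/ x' = 1. *)

From mathcomp Require Import all_boot all_order.
Import Order.Theory.
Local Open Scope order_scope.
Set Implicit Arguments. Unset Strict Implicit. Unset Printing Implicit Defensive.

Section Bounds.
Context {disp : Order.disp_t} {T : tbPOrderType disp}.

Lemma U2C (a b z : T) : U2 a b z -> U2 b a z.
Proof. by case. Qed.

Lemma lower_bound2 (a b x : T) : lower_bound [:: a; b] x <-> x <= a /\ x <= b.
Proof.
split=> [lbx | [xa xb] m]; first by split; apply: lbx; rewrite !inE eqxx ?orbT.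
by rewrite !inE => /orP[] /eqP->.
Qed.

Lemma U2_sup_top (a b y : T) : is_sup a b \top -> b <= y ->
  forall z, U2 a y z <-> z = \top.
Proof.
move=> [_ sup_le] le_by z; split=> [[az yz] | ->]; last by split; apply: lex1.
apply/eqP; rewrite eq_le lex1 /=; apply: sup_le; split=> //.
exact: le_trans le_by yz.
Qed.

Lemma Min_top (A : T -> Prop) : (forall z, A z <-> z = \top) ->
  forall z, Min A z <-> z = \top.
Proof.
move=> A_top z; split=> [[/A_top] // | ->].
split=> [|w /A_top -> //]; exact/A_top.
Qed.

Variable c : T -> T.
Hypothesis c_antitone : antitone c.
Hypothesis c_invol : involutive_op c.

Lemma le_compl_swap (x y : T) : x <= c y -> y <= c x.
Proof. by move=> /c_antitone; rewrite c_invol. Qed.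

Lemma lower_bound_compl (a b x : T) :
  lower_bound [:: c a; c b] x <-> U2 a b (c x).
Proof.
split=> [/lower_bound2 [/le_compl_swap ? /le_compl_swap ?] | [ax bx]] //.
by apply/lower_bound2; split; apply: le_compl_swap.
Qed.

Lemma Min_U2_below : @lub_complete disp T ->
  forall a b z : T, U2 a b z -> exists2 w, Min (U2 a b) w & w <= z.
Proof.
move=> lubP a b z Uz.
have lbz : lower_bound [:: c a; c b] (c z) by apply/lower_bound_compl; rewrite c_invol.
have [m [/lower_bound_compl Um m_max] le_zm] := lubP _ _ lbz.
exists (c m); last by rewrite -[z]c_invol; apply: c_antitone.
split=> // v Uv le_vm.
have lbv : lower_bound [:: c a; c b] (c v) by apply/lower_bound_compl; rewrite c_invol.
have -> : m = c v by apply/esym/m_max => //; apply: le_compl_swap.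
by rewrite c_invol.
Qed.

End Bounds.

Theorem theorem1 (disp : Order.disp_t) (T : tbPOrderType disp) (c : T -> T)
  (c_antitone : antitone c) (c_invol : involutive_op c)
  (P_orth : orthogonal c) (P_lub : @lub_complete disp T) :
  orthocomplemented c <-> (forall x y : T, x <= y -> implC_is_one c x y).
Proof.
split=> [ortho x y le_xy | one x].
  have [[xU cxU] sup_le] := ortho x.
  apply: Min_top; apply: U2_sup_top le_xy.
  by split=> [|z /U2C]; [split | apply: sup_le].
split=> [|z /U2C Uz]; first by split; apply: lex1.
have [w /(one x x (lexx x)) -> //] := Min_U2_below c_antitone c_invol P_lub Uz.
Qed.
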